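(* Let $X$ be a topological space and $f\colon X\to\mathbb{R}^d$ an injective function. Suppose there exists a continuous map $\psi\colon S^1\to X$ such that $\psi(x)\neq\psi(-x)$ for all $x\in S^1$. Then $\alpha(f)=0$ if and only if $f$ is continuous.
   Context: $\mathrm{Conf}_2(X)=\{(x,y)\in X\times X: x\neq y\}$ with the subspace topology. $S^{d-1}$ carries the geodesic metric $d(u,v)=\arccos\langle u,v\rangle$ (for $d=1$, $S^0=\{\pm1\}$ with the two points at distance $\pi$). For a topological space $X$ and a metric space $Y$, $\delta(g)=\inf\{\delta\ge 0 : \text{for every } x\in X \text{ there is an open neighborhood } U_x \text{ of } x \text{ with } \operatorname{diam}(g(U_x))\le\delta\}$. For injective $f\colon X\to\mathbb{R}^d$, $\Phi_f(x,y)=\frac{f(x)-f(y)}{\|f(x)-f(y)\|}$ and $\alpha(f)=\delta(\Phi_f)$. *)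

From HB Require Import structures.
From mathcomp Require Import all_boot all_order all_algebra.
From mathcomp Require Import all_classical all_reals all_analysis.
Set Implicit Arguments. Unset Strict Implicit. Unset Printing Implicit Defensive.
Import Order.TTheory GRing.Theory Num.Theory.
Import numFieldNormedType.Exports.
Local Open Scope classical_set_scope.
Local Open Scope ring_scope.

(* R^d is modelled as row vectors 'rV[R]_d (its canonical topology is the
   product/Euclidean topology). Euclidean inner product and norm: *)
Definition edot {R : realType} {d : nat} (u v : 'rV[R]_d) : R :=
  \sum_(i < d) u 0 i * v 0 i.
Definition enorm {R : realType} {d : nat} (u : 'rV[R]_d) : R :=
  Num.sqrt (edot u u).

Definition sphere (R : realType) (d : nat) : set 'rV[R]_d :=
  [set u | enorm u = 1].
Arguments sphere R d : clear implicits.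

Definition geod {R : realType} {d : nat} (u v : 'rV[R]_d) : R :=
  acos (edot u v).

Definition gdiam {R : realType} {Y : Type} (dist : Y -> Y -> R) (B : set Y)
  : \bar R :=
  ereal_sup [set (dist a b)%:E | a in B & b in B].

(* delta(g) for g defined on the subspace A of the topological space T
   (subspace topology: open neighbourhoods of x in A are U `&` A with
   U open in T and x in U) with values in a metric space (Y, dist). *)
Definition delta_sub {R : realType} {T : topologicalType} {Y : Type}
  (dist : Y -> Y -> R) (A : set T) (g : T -> Y) : \bar R :=
  ereal_inf [set e%:E | e in [set e : R | 0 <= e /\
     forall x, A x -> exists U : set T,
       [/\ open U, U x & (gdiam dist (g @` (U `&` A)) <= e%:E)%E]]].

Definition Conf2 (X : topologicalType) : set (X * X) :=
  [set p | p.1 <> p.2].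
Arguments Conf2 X : clear implicits.

Definition Phi {R : realType} {X : Type} {d : nat} (f : X -> 'rV[R]_d)
  (p : X * X) : 'rV[R]_d :=
  (enorm (f p.1 - f p.2))^-1 *: (f p.1 - f p.2).

Definition alpha {R : realType} {X : topologicalType} {d : nat}
  (f : X -> 'rV[R]_d) : \bar R :=
  delta_sub geod (Conf2 X) (Phi f).

(* For maps with values in the unit sphere, a vanishing delta for the geodesic
   metric is the same as continuity; so alpha(f) = 0 says exactly that Phi_f is
   continuous on Conf_2(X), which certainly holds when f is continuous.
   Conversely, fix x0.  If two directions Phi_f(x0, y1), Phi_f(x0, y2) are
   linearly independent, then f(x) lies on the line through f(y1) directed by
   Phi_f(x, y1) and on the line through f(y2) directed by Phi_f(x, y2); as
   x -> x0 these lines tend to two lines meeting only at f(x0), so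
   f(x) -> f(x0).  Otherwise f(X) lies on a line through f(x0) with direction
   u, and t |-> <Phi_f(psi(e^it), psi(-e^it)), u> is continuous, never zero,
   and changes sign between t = 0 and t = pi, which contradicts the
   intermediate value theorem. *)

From HB Require Import structures.
From mathcomp Require Import all_boot all_order all_algebra.
From mathcomp Require Import all_classical all_reals all_analysis.
From mathcomp Require Import ring lra.
Set Implicit Arguments. Unset Strict Implicit. Unset Printing Implicit Defensive.
Import Order.TTheory GRing.Theory Num.Theory.
Import numFieldNormedType.Exports.
Local Open Scope classical_set_scope.
Local Open Scope ring_scope.

Section Euclidean.
Variables (R : realType) (d : nat).
Implicit Types (u v w : 'rV[R]_d) (k : R).

Lemma edotC u v : edot u v = edot v u.
Proof. by apply: eq_bigr => i _; rewrite mulrC. Qed.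

Lemma edotDl u v w : edot (u + v) w = edot u w + edot v w.
Proof.
by rewrite /edot -big_split; apply: eq_bigr => i _; rewrite mxE mulrDl.
Qed.

Lemma edotZl k u v : edot (k *: u) v = k * edot u v.
Proof. by rewrite /edot mulr_sumr; apply: eq_bigr => i _; rewrite mxE mulrA. Qed.

Lemma edotNl u v : edot (- u) v = - edot u v.
Proof. by rewrite -scaleN1r edotZl mulN1r. Qed.

Lemma edotDr u v w : edot u (v + w) = edot u v + edot u w.
Proof. by rewrite edotC edotDl !(edotC u). Qed.

Lemma edotZr k u v : edot u (k *: v) = k * edot u v.
Proof. by rewrite edotC edotZl edotC. Qed.

Lemma edotNr u v : edot u (- v) = - edot u v.
Proof. by rewrite edotC edotNl edotC. Qed.

Lemma edot0l u : edot 0 u = 0.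
Proof. by rewrite -(scale0r 0) edotZl mul0r. Qed.

Definition edotE := (edotDl, edotDr, edotNl, edotNr, edotZl, edotZr).

Lemma edot_ge0 u : 0 <= edot u u.
Proof. by apply: sumr_ge0 => i _; rewrite -expr2 sqr_ge0. Qed.

Lemma edot_eq0 u : edot u u = 0 -> u = 0.
Proof.
move=> /eqP; rewrite psumr_eq0 => [/allP u0|i _]; last by rewrite -expr2 sqr_ge0.
apply/rowP => i; rewrite mxE.
by have /(_ (mem_index_enum i)) := u0 i; rewrite -expr2 sqrf_eq0 => /eqP.
Qed.

Lemma sqr_entry_le_edot u i : u 0 i ^+ 2 <= edot u u.
Proof.
rewrite /edot (bigD1 i) //= -expr2 lerDl.
by apply: sumr_ge0 => j _; rewrite -expr2 sqr_ge0.
Qed.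

Lemma enorm_eq0 u : enorm u = 0 -> u = 0.
Proof.
by move=> /eqP; rewrite sqrtr_eq0 le_eqVlt ltNge edot_ge0 orbF => /eqP/edot_eq0.
Qed.

Lemma enorm0 : enorm (0 : 'rV[R]_d) = 0.
Proof. by rewrite /enorm edot0l sqrtr0. Qed.

Lemma enormN u : enorm (- u) = enorm u.
Proof. by rewrite /enorm edotNl edotNr opprK. Qed.

Lemma enorm_scale u : u = enorm u *: ((enorm u)^-1 *: u).
Proof.
have [/enorm_eq0 ->|u0] := eqVneq (enorm u) 0; first by rewrite !scaler0.
by rewrite scalerA divff // scale1r.
Qed.

Lemma edot_normalize u : u != 0 ->
  edot ((enorm u)^-1 *: u) ((enorm u)^-1 *: u) = 1.
Proof.
move=> u0; have nu0 : enorm u != 0 by apply: contra u0 => /eqP/enorm_eq0 ->.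
rewrite edotZl edotZr mulrA -expr2 exprVn /enorm sqr_sqrtr ?edot_ge0 //.
by apply: mulVf; apply: contra nu0 => /eqP; rewrite /enorm => ->; rewrite sqrtr0.
Qed.

Lemma edot_subD_le u v w :
  edot (u - v) (u - v) <= 2 * edot (u - w) (u - w) + 2 * edot (v - w) (v - w).
Proof.
have := edot_ge0 (u + v - w *+ 2).
rewrite mulr2n !edotE (edotC v u) (edotC w u) (edotC w v); lra.
Qed.

Section UnitVectors.
Variables u v : 'rV[R]_d.
Hypotheses (u1 : edot u u = 1) (v1 : edot v v = 1).

Lemma edot_unit_itv : -1 <= edot u v <= 1.
Proof.
have := edot_ge0 (u - v); have := edot_ge0 (u + v).
rewrite !edotE (edotC v u) u1 v1 => ? ?; apply/andP; split; lra.
Qed.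

Lemma edot_unit_sub : edot (u - v) (u - v) = 2 - 2 * edot u v.
Proof. by rewrite !edotE (edotC v u) u1 v1; ring. Qed.

End UnitVectors.
End Euclidean.

Section Gram.
Variables (R : realType) (d : nat).
Implicit Types (u v m : 'rV[R]_d).

Definition gram u v := edot u u * edot v v - edot u v ^+ 2.

Lemma gram_solve (t1 t2 : R) u v m : t1 *: u - t2 *: v = m ->
  t1 * gram u v = edot v v * edot m u - edot u v * edot m v.
Proof. by move<-; rewrite /gram !edotE (edotC v u); ring. Qed.

Lemma gram_eq0_colinear u v : u != 0 -> gram u v = 0 ->
  v = (edot u v / edot u u) *: u.
Proof.
move=> u0 g0; apply/eqP; rewrite -subr_eq0; apply/eqP/edot_eq0.
have uu0 : edot u u != 0 by apply: contra u0 => /eqP/edot_eq0 ->.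
rewrite !edotE (edotC v u); apply: (mulfI uu0); rewrite mulr0 -[RHS]g0 /gram.
by field.
Qed.

End Gram.

Section Limits.
Variables (R : realType) (d : nat) (T : Type) (F : set_system T).
Context {FF : Filter F}.
Implicit Types (a b w : T -> 'rV[R]_d).

Lemma cvg_edot a b (a0 b0 : 'rV[R]_d) : a @ F --> a0 -> b @ F --> b0 ->
  edot (a x) (b x) @[x --> F] --> edot a0 b0.
Proof.
move=> aa0 bb0; apply: (cvg_big add_continuous) => i _.
by apply: cvgM; [exact: (cvg_comp _ _ aa0 (@coord_continuous _ _ _ 0 i a0))
               | exact: (cvg_comp _ _ bb0 (@coord_continuous _ _ _ 0 i b0))].
Qed.

Lemma cvg_enorm a (a0 : 'rV[R]_d) :
  a @ F --> a0 -> enorm (a x) @[x --> F] --> enorm a0.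
Proof.
by move=> aa0; apply: cvg_comp (cvg_edot aa0 aa0) _; exact: sqrt_continuous.
Qed.

Lemma cvg_rV_edot w (v : 'rV[R]_d) :
  (forall e, 0 < e -> \forall x \near F, edot (w x - v) (w x - v) < e) ->
  w @ F --> v.
Proof.
move=> wv; apply/cvg_ballP => e e0.
apply: filterS (wv _ (exprn_gt0 2 e0)) => x wxv; split => // i j.
rewrite ord1 /ball /= -(ltr_pXn2r (_ : 0 < 2)%N) ?nnegrE ?(ltW e0) //.
rewrite real_normK ?num_real // -sqrrN opprB.
by have := sqr_entry_le_edot (w x - v) j; rewrite !mxE => /le_lt_trans; apply.
Qed.

Lemma cvg_line_intersection (z w1 w2 : T -> 'rV[R]_d) (t1 t2 : T -> R)
    (b1 b2 u1 u2 z0 : 'rV[R]_d) (r1 r2 : R) :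
  (forall x, z x = b1 + t1 x *: w1 x) -> (forall x, z x = b2 + t2 x *: w2 x) ->
  w1 @ F --> u1 -> w2 @ F --> u2 ->
  z0 = b1 + r1 *: u1 -> z0 = b2 + r2 *: u2 -> gram u1 u2 != 0 ->
  z @ F --> z0.
Proof.
move=> zw1 zw2 w1u1 w2u2 z0u1 z0u2 g0.
pose num v1 v2 := edot v2 v2 * edot (b2 - b1) v1 - edot v1 v2 * edot (b2 - b1) v2.
have solve s1 s2 v1 v2 :
    b1 + s1 *: v1 = b2 + s2 *: v2 -> s1 * gram v1 v2 = num v1 v2.
  move=> e; apply: gram_solve.
  have -> : b2 = b1 + s1 *: v1 - s2 *: v2 by rewrite e addrK.
  by rewrite -addrA (addrC b1) addrK.
have G_cvg : gram (w1 x) (w2 x) @[x --> F] --> gram u1 u2.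
  by apply: cvgB; [apply: cvgM|rewrite expr2; apply: cvgM]; exact: cvg_edot.
have N_cvg : num (w1 x) (w2 x) @[x --> F] --> num u1 u2.
  by apply: cvgB; apply: cvgM; apply: cvg_edot => //; exact: cvg_cst.
(* Solving the Gram system makes [t1] a rational function of [w1] and [w2]. *)
have t1_cvg : t1 @ F --> r1.
  have -> : r1 = num u1 u2 / gram u1 u2.
    by rewrite -(solve r1 r2) ?mulfK // -z0u1 -z0u2.
  apply: cvg_trans _ (cvgM N_cvg (cvgV g0 G_cvg)); apply: near_eq_cvg.
  near=> x.
  have gx0 : gram (w1 x) (w2 x) != 0 by near: x; exact: cvgr_neq0 G_cvg g0.
  by rewrite /= -(solve (t1 x) (t2 x)) ?mulfK // -zw1 -zw2.
rewrite (funext zw1) z0u1; apply: cvgD; first exact: cvg_cst.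
exact: cvgZ.
Unshelve. all: by end_near.
Qed.

End Limits.

Section DeltaSub.
Variables (R : realType) (T : topologicalType) (Y : Type).
Variables (dist : Y -> Y -> R) (A : set T) (g : T -> Y).

Lemma delta_sub_ge0 : (0 <= delta_sub dist A g)%E.
Proof. by apply/ereal_infP => _ [e [e0 _] <-]; rewrite lee_fin. Qed.

Lemma delta_sub_le (e : R) : 0 <= e ->
  (forall x, A x -> exists U, [/\ open U, U x &
     forall a b, (U `&` A) a -> (U `&` A) b -> dist (g a) (g b) <= e]) ->
  (delta_sub dist A g <= e%:E)%E.
Proof.
move=> e0 small; apply: ereal_inf_lbound; exists e => //; split => // x Ax.
have [U [oU Ux Ue]] := small x Ax; exists U; split => //.
apply: ge_ereal_sup => _ [_ [a Ua <-] [_ [b Ub <-] <-]].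
by rewrite lee_fin; exact: Ue.
Qed.

Lemma near_delta_sub_lt (e : R) x : (delta_sub dist A g < e%:E)%E -> A x ->
  \forall q \near within A (nbhs x), dist (g q) (g x) <= e.
Proof.
move=> /ereal_inf_lt [_ [e' [_ small] <-]]; rewrite lte_fin => e'e Ax.
have [U [oU Ux Ue']] := small x Ax.
apply: filterS (open_nbhs_nbhs (conj oU Ux)) => q Uq Aq.
rewrite -lee_fin (le_trans _ (le_trans Ue' (ltW _))) ?lte_fin //.
by apply: ereal_sup_ubound; exists (g q); [exists q | exists (g x); [exists x|]].
Qed.
End DeltaSub.

Section DeltaGeod.
Variables (R : realType) (d : nat).

Lemma geod_unit_le (a b : 'rV[R]_d) (e : R) :
  edot a a = 1 -> edot b b = 1 -> 0 <= e <= pi ->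
  (geod a b <= e) = (cos e <= edot a b).
Proof.
move=> a1 b1 e_itv; have ab_itv := edot_unit_itv a1 b1.
have acos_itv : acos (edot a b) \in `[0, pi].
  by rewrite in_itv /= acos_ge0 ?acos_lepi.
by rewrite /geod leNgt -ltr_cos ?in_itv // acosK ?in_itv // -leNgt.
Qed.

Variables (T : topologicalType) (A : set T) (g : T -> 'rV[R]_d).
Hypothesis g_unit : forall x, A x -> edot (g x) (g x) = 1.

Lemma delta_geod_eq0_cvg : delta_sub geod A g = 0%E ->
  forall x, A x -> g @ within A (nbhs x) --> g x.
Proof.
move=> g0 x Ax; apply: cvg_rV_edot => e e0.
set r := Num.min e 2.
have [r_gt0 r_le_e r_le2] : [/\ 0 < r, r <= e & r <= 2].
  by split; rewrite ?lt_min ?e0 ?ltr0n ?ge_min ?lexx ?orbT.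
have c_itv : -1 <= 1 - r / 4 <= 1 by apply/andP; split; lra.
have /near_delta_sub_lt/(_ Ax) : (delta_sub geod A g < (acos (1 - r / 4))%:E)%E.
  by rewrite g0 lte_fin acos_gt0 //; apply/andP; split; lra.
apply: filterS2 (near_withinT _ _) => q Aq.
rewrite geod_unit_le ?g_unit ?acosK ?in_itv ?acos_ge0 ?acos_lepi //.
by rewrite edot_unit_sub ?g_unit // => ?; lra.
Qed.
Lemma cvg_delta_geod_eq0 : (forall x, A x -> g @ within A (nbhs x) --> g x) ->
  delta_sub geod A g = 0%E.
Proof.
move=> gc; apply/eqP; rewrite eq_le delta_sub_ge0 andbT.
suff small e : 0 < e <= pi -> (delta_sub geod A g <= e%:E)%E.
  apply/lee_addgt0Pr => e e0; rewrite add0e.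
  apply: le_trans (small (Num.min e pi) _) _.
    by rewrite lt_min e0 pi_gt0 ge_min lexx orbT.
  by rewrite lee_fin ge_min lexx.
move=> /andP[e0 epi]; apply: delta_sub_le => [|x Ax]; first exact: ltW.
have cose : cos e < 1.
  by rewrite -cos0 ltr_cos ?in_itv //= ?lexx ?pi_ge0 ?(ltW e0).
have : \forall q \near within A (nbhs x), 1 - (1 - cos e) / 4 < edot (g q) (g x).
  have := cvgr_gt _ (cvg_edot (gc x Ax) (cvg_cst (g x))).
  by rewrite g_unit //; apply; lra.
rewrite /within nbhsE => -[U [oU Ux] near_x].
exists U; split => // a b [Ua Aa] [Ub Ab].
rewrite geod_unit_le ?g_unit ?e0 ?(ltW e0) //.
have := edot_subD_le (g a) (g b) (g x); rewrite !edot_unit_sub ?g_unit //.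
by have := near_x a Ua Aa; have := near_x b Ub Ab; lra.
Qed.

Lemma delta_geod_eq0P : delta_sub geod A g = 0%E <-> {within A, continuous g}.
Proof.
rewrite subspace_continuousP.
by split; [exact: delta_geod_eq0_cvg | exact: cvg_delta_geod_eq0].
Qed.

End DeltaGeod.

Section Phi.
Variables (R : realType) (X : topologicalType) (d : nat) (f : X -> 'rV[R]_d).
Hypothesis f_inj : injective f.

Lemma Phi_swap x y : Phi f (y, x) = - Phi f (x, y).
Proof. by rewrite /Phi /= -opprB enormN scalerN. Qed.

Lemma Phi_scale x y : f x - f y = enorm (f x - f y) *: Phi f (x, y).
Proof. exact: enorm_scale. Qed.

Lemma Phi_unit p : Conf2 X p -> edot (Phi f p) (Phi f p) = 1.
Proof.
by move=> p12; apply: edot_normalize; rewrite subr_eq0; apply/eqP => /f_inj.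
Qed.

Lemma continuous_Phi : continuous f -> {within Conf2 X, continuous (Phi f)}.
Proof.
move=> fc; apply/subspace_continuousP => -[x y] xy; apply: cvg_within_filter.
have fxy : (f q.1 - f q.2) @[q --> (x, y)] --> f x - f y.
  apply: cvgB.
    exact: (cvg_comp _ _ (@cvg_fst _ _ (nbhs x) (nbhs y) _) (fc x)).
  exact: (cvg_comp _ _ (@cvg_snd _ _ (nbhs x) (nbhs y) _) (fc y)).
apply: cvgZ (cvgV _ (cvg_enorm fxy)) fxy.
by apply/eqP => /enorm_eq0/eqP; rewrite subr_eq0 => /eqP/f_inj.
Qed.

Lemma colinear_Phi_edot_neq0 x0 y0 : x0 <> y0 ->
  (forall y, x0 <> y -> gram (Phi f (x0, y0)) (Phi f (x0, y)) = 0) ->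
  forall p, Conf2 X p -> edot (Phi f p) (Phi f (x0, y0)) != 0.
Proof.
move=> x0y0 colin [p q] pq; set u := Phi f (x0, y0).
have u1 : edot u u = 1 by apply: Phi_unit.
have u0 : u != 0.
  by apply/eqP => u0; move: u1; rewrite u0 edot0l => /eqP; rewrite eq_sym oner_eq0.
have on_line y : exists s, f y = f x0 + s *: u.
  have [<-|x0y] := pselect (x0 = y); first by exists 0; rewrite scale0r addr0.
  exists (- (enorm (f x0 - f y) * (edot u (Phi f (x0, y)) / edot u u))).
  rewrite scaleNr -scalerA -(gram_eq0_colinear u0 (colin y x0y)) -Phi_scale.
  by rewrite opprB addrC subrK.
have [[s fp] [t fq]] := (on_line p, on_line q).
have st0 : s - t != 0.
  apply: contra_not_neq pq => /eqP; rewrite subr_eq0 => /eqP st.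
  by apply: f_inj; rewrite fp fq st.
have fpq : f p - f q = (s - t) *: u.
  by rewrite fp fq opprD addrACA subrr add0r scalerBl.
have -> : Phi f (p, q) = (enorm ((s - t) *: u))^-1 *: ((s - t) *: u).
  by rewrite /Phi /= fpq.
rewrite 2!edotZl u1 mulr1 mulf_neq0 // invr_eq0.
by apply/eqP => /enorm_eq0/eqP; rewrite scaler_eq0 (negbTE st0) (negbTE u0).
Qed.

Hypothesis Phi_cont : {within Conf2 X, continuous (Phi f)}.

Lemma cvg_noncolinear x0 y1 y2 : x0 <> y1 -> x0 <> y2 ->
  gram (Phi f (x0, y1)) (Phi f (x0, y2)) != 0 -> f @ x0 --> f x0.
Proof.
move=> x0y1 x0y2 g0.
(* [X] need not be T1, so [y] may lie in every neighbourhood of [x0]; at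
   [x = y] the scale vanishes and any direction will do. *)
pose w y x := if `[< x = y >] then Phi f (x0, y) else Phi f (x, y).
have f_line y x : f x = f y + enorm (f x - f y) *: w y x.
  rewrite /w; case: asboolP => [xy|_].
    by rewrite xy subrr enorm0 scale0r addr0.
  by rewrite -Phi_scale addrC subrK.
have w_cvg y : x0 <> y -> w y @ x0 --> Phi f (x0, y).
  move=> x0y V nV.
  have pair_cvg : (x, y) @[x --> x0] --> (x0, y).
    by apply: cvg_pair; [exact: cvg_id | exact: cvg_cst].
  have /pair_cvg near_x := (subspace_continuousP _ _).1 Phi_cont (x0, y) x0y V nV.
  suff : \forall x \near x0, V (w y x) by [].
  near=> x; rewrite /w; case: asboolP => [_|]; first exact: nbhs_singleton.
  by near: x; exact: near_x.
apply: (cvg_line_intersection (f_line y1) (f_line y2) (w_cvg _ x0y1) (w_cvg _ x0y2)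
    (r1 := enorm (f x0 - f y1)) (r2 := enorm (f x0 - f y2)) _ _ g0);
  by rewrite -Phi_scale addrC subrK.
Unshelve. all: by end_near.
Qed.

End Phi.

Lemma cvg_comp_within {T : Type} {U V : topologicalType} (F : set_system T)
    {FF : Filter F} (A : set U) (g : T -> U) (h : U -> V) (x : U) :
  g @ F --> x -> (forall t, A (g t)) -> h @ within A (nbhs x) --> h x ->
  h (g t) @[t --> F] --> h x.
Proof.
move=> gx gA hx; apply: cvg_comp _ hx => P /gx.
by apply: (@filterS _ F _ (fun t => A (g t) -> P (g t))) => t; apply; exact: gA.
Qed.

Section AntipodalLoop.
Variables (R : realType) (X : topologicalType) (psi : 'rV[R]_2 -> X).
Hypothesis psi_cont : {within sphere R 2, continuous psi}.
Hypothesis psi_anti : forall x, sphere R 2 x -> psi x <> psi (- x).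

Definition circle (t : R) : 'rV[R]_2 :=
  cos t *: delta_mx 0 0 + sin t *: delta_mx 0 1.

Lemma circle_sphere t : sphere R 2 (circle t).
Proof.
rewrite /sphere /= /enorm /edot !big_ord_recl big_ord0 !mxE /=.
by rewrite !mulr1 !mulr0 !addr0 !add0r -!expr2 cos2Dsin2 sqrtr1.
Qed.

Lemma circle_pi : circle pi = - circle 0.
Proof.
by rewrite /circle cospi sinpi cos0 sin0 !scale0r !addr0 scaleN1r scale1r.
Qed.

Lemma continuous_circle : continuous circle.
Proof.
move=> t; apply: cvgD; apply: cvgZ; try exact: cvg_cst.
  exact: continuous_cos.
exact: continuous_sin.
Qed.

Lemma odd_within_continuous_root (h : X * X -> R) :
  {within Conf2 X, continuous h} -> (forall x y, h (y, x) = - h (x, y)) ->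
  exists2 p, Conf2 X p & h p = 0.
Proof.
move=> /subspace_continuousP hc h_odd.
have /subspace_continuousP psic := psi_cont.
pose gamma t := (psi (circle t), psi (- circle t)).
have gamma_conf t : Conf2 X (gamma t) := psi_anti (circle_sphere t).
have sphereN s : sphere R 2 (- circle s).
  by rewrite /sphere /= enormN; exact: circle_sphere.
have gamma_cvg t : gamma @ t --> gamma t.
  have c1 : psi (circle s) @[s --> t] --> psi (circle t).
    apply: (cvg_comp_within (@continuous_circle t) circle_sphere).
    exact: psic (circle_sphere t).
  have c2 : psi (- circle s) @[s --> t] --> psi (- circle t).
    apply: (cvg_comp_within (cvgN (@continuous_circle t)) sphereN).
    exact: psic (sphereN t).
  exact: cvg_pair c1 c2.
have hgamma_cont : continuous (h \o gamma).
  move=> t; apply: (cvg_comp_within (gamma_cvg t) gamma_conf).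
  exact: hc (gamma_conf t).
have hgamma_pi : h (gamma pi) = - h (gamma 0).
  by rewrite /gamma circle_pi opprK h_odd.
have [|t _ ht0] := IVT (pi_ge0 R) (continuous_subspaceT hgamma_cont) (v := 0).
  rewrite /= hgamma_pi; case: (lerP 0 (h (gamma 0))) => h0.
    by rewrite ge_min le_max; apply/andP; split; apply/orP; [right|left]; lra.
  by rewrite ge_min le_max; apply/andP; split; apply/orP; [left|right]; lra.
by exists (gamma t).
Qed.

End AntipodalLoop.

Theorem corollary3p8 (R : realType) (X : topologicalType) (d : nat)
  (f : X -> 'rV[R]_d) (f_inj : injective f)
  (psi : 'rV[R]_2 -> X)
  (psi_cont : {within sphere R 2, continuous psi})
  (psi_anti : forall x, sphere R 2 x -> psi x <> psi (- x)) :
  alpha f = 0%E <-> continuous f.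
Proof.
have alpha0P := delta_geod_eq0P (Phi_unit f_inj).
split => [/alpha0P Phi_cont x0|/(continuous_Phi f_inj)/alpha0P//].
have [y0 x0y0] : exists y0, x0 <> y0.
  have [->|] := pselect (x0 = psi (circle 0)); last by exists (psi (circle 0)).
  by exists (psi (- circle 0)); exact: psi_anti _ (circle_sphere 0).
have [[y1 [y2 [x0y1 x0y2 g0]]]|noncolin] := pselect (exists y1 y2,
    [/\ x0 <> y1, x0 <> y2 & gram (Phi f (x0, y1)) (Phi f (x0, y2)) != 0]).
  exact: (@cvg_noncolinear _ _ _ _ Phi_cont _ _ _ x0y1 x0y2 g0).
have colin y : x0 <> y -> gram (Phi f (x0, y0)) (Phi f (x0, y)) = 0.
  by move=> x0y; apply: contra_notP noncolin => /eqP g0; exists y0, y.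
pose h p := edot (Phi f p) (Phi f (x0, y0)).
have [|x y|p p_conf] := odd_within_continuous_root psi_cont psi_anti (h := h).
- apply/subspace_continuousP => p p_conf; apply: cvg_edot (cvg_cst _).
  exact: (subspace_continuousP _ _).1 Phi_cont p p_conf.
- by rewrite /h Phi_swap edotNl.
have := colinear_Phi_edot_neq0 f_inj x0y0 colin p_conf.
by rewrite -/(h p) => /eqP.
Qed.
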